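(* Let $\mathcal{I} \in \mathrm{Ins}(\Omega,\mathcal{H},\mathcal{K})$ and $\mathcal{J} \in \mathrm{Ins}(\Lambda,\mathcal{H},\mathcal{V})$ be instruments such that the Lüders instruments $\mathcal{I}^{\mathsf{A}^{\mathcal{I}}}$ and $\mathcal{I}^{\mathsf{A}^{\mathcal{J}}}$ of their induced POVMs are compatible. Then $\mathcal{I}$ and $\mathcal{J}$ are compatible.
   Context: All Hilbert spaces are finite-dimensional and complex, and all outcome sets are finite. A POVM $\mathsf{A}\in\mathcal{O}(\Omega,\mathcal{H})$ is a map $x\mapsto \mathsf{A}(x)$ from $\Omega$ to positive operators on $\mathcal{H}$ with $\sum_x \mathsf{A}(x)=I$. An instrument $\mathcal{I}\in\mathrm{Ins}(\Omega,\mathcal{H},\mathcal{K})$ is a family $(\mathcal{I}_x)_{x\in\Omega}$ of completely positive trace-nonincreasing linear maps $\mathcal{L}(\mathcal{H})\to\mathcal{L}(\mathcal{K})$ whose sum is trace preserving; its induced POVM $\mathsf{A}^{\mathcal{I}}$ is defined by $\mathrm{tr}[\mathsf{A}^{\mathcal{I}}(x)\varrho]=\mathrm{tr}[\mathcal{I}_x(\varrho)]$. The Lüders instrument of a POVM $\mathsf{A}\in\mathcal{O}(\Omega,\mathcal{H})$ is $\mathcal{I}^{\mathsf{A}}\in\mathrm{Ins}(\Omega,\mathcal{H},\mathcal{H})$, $\mathcal{I}^{\mathsf{A}}_x(\varrho)=\sqrt{\mathsf{A}(x)}\varrho\sqrt{\mathsf{A}(x)}$. Two instruments $\mathcal{I}\in\mathrm{Ins}(\Omega,\mathcal{H},\mathcal{K})$,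 $\mathcal{J}\in\mathrm{Ins}(\Lambda,\mathcal{H},\mathcal{V})$ are compatible if there is $\mathcal{G}\in\mathrm{Ins}(\Omega\times\Lambda,\mathcal{H},\mathcal{K}\otimes\mathcal{V})$ with $\sum_{x}\mathrm{tr}_{\mathcal{K}}[\mathcal{G}_{(x,y)}(\varrho)]=\mathcal{J}_y(\varrho)$ for all $y$ and $\sum_y\mathrm{tr}_{\mathcal{V}}[\mathcal{G}_{(x,y)}(\varrho)]=\mathcal{I}_x(\varrho)$ for all $x$, for all states $\varrho$. *)

(* Finite-dimensional complex Hilbert spaces are modelled as
   C^n for a numClosedFieldType C (e.g. algC, or complex R); operators on C^n
   are matrices 'M[C]_n.  The tensor product C^m (x) C^p is C^(m*p) with the
   index convention of mathcomp.real_closed.mxtens (mxtens_index). *)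
From HB Require Import structures.
From mathcomp Require Import all_boot all_order all_algebra.
From mathcomp Require Import mxtens.
From Stdlib Require Import ClassicalEpsilon.
Set Implicit Arguments. Unset Strict Implicit. Unset Printing Implicit Defensive.
Import Order.TTheory GRing.Theory Num.Theory.
Local Open Scope ring_scope.

Section Defs.
Variable C : numClosedFieldType.

Definition adjmx {r s : nat} (A : 'M[C]_(r, s)) : 'M[C]_(s, r) :=
  (map_mx Num.conj A)^T.

Definition psdmx {n : nat} (A : 'M[C]_n) : Prop :=
  forall v : 'cV[C]_n, 0 <= (adjmx v *m A *m v) 0 0.

Definition state {n : nat} (rho : 'M[C]_n) : Prop := psdmx rho /\ \tr rho = 1.

Definition is_linear {n m : nat} (f : 'M[C]_n -> 'M[C]_m) : Prop :=
  forall (a : C) (X Y : 'M[C]_n), f (a *: X + Y) = a *: f X + f Y.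

Definition mxblock_of {k n : nat} (X : 'M[C]_(k * n)) (a c : 'I_k) : 'M[C]_n :=
  \matrix_(b, d) X (mxtens_index (a, b)) (mxtens_index (c, d)).

(* id_k (x) f : L(C^k (x) C^n) -> L(C^k (x) C^m) *)
Definition ampliate {n m : nat} (k : nat) (f : 'M[C]_n -> 'M[C]_m)
  (X : 'M[C]_(k * n)) : 'M[C]_(k * m) :=
  \matrix_(i, j) f (mxblock_of X (mxtens_unindex i).1 (mxtens_unindex j).1)
                   (mxtens_unindex i).2 (mxtens_unindex j).2.

Definition completely_positive {n m : nat} (f : 'M[C]_n -> 'M[C]_m) : Prop :=
  forall (k : nat) (X : 'M[C]_(k * n)), psdmx X -> psdmx (@ampliate n m k f X).

Definition is_instrument {Omega : finType} {n m : nat}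
  (I : Omega -> 'M[C]_n -> 'M[C]_m) : Prop :=
  [/\ forall x, is_linear (I x),
      forall x, completely_positive (I x),
      forall x (rho : 'M[C]_n), psdmx rho -> \tr (I x rho) <= \tr rho
    & forall rho : 'M[C]_n, \tr (\sum_x I x rho) = \tr rho].

Definition is_povm {Omega : finType} {n : nat} (A : Omega -> 'M[C]_n) : Prop :=
  (forall x, psdmx (A x)) /\ \sum_x A x = 1%:M.

(* induced POVM: the unique A with tr[A(x) rho] = tr[I_x(rho)] for all rho,
   namely A(x)_{ij} = tr[I_x(|j><i|)]. *)
Definition induced_povm {Omega : finType} {n m : nat}
  (I : Omega -> 'M[C]_n -> 'M[C]_m) (x : Omega) : 'M[C]_n :=
  \matrix_(i, j) \tr (I x (delta_mx j i)).

(* the positive square root of a positive operator (chosen classically; it is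
   the unique S with S positive and S S = A) *)
Definition psd_sqrt {n : nat} (A : 'M[C]_n) : 'M[C]_n :=
  epsilon (inhabits 0) (fun S : 'M[C]_n => psdmx S /\ S *m S = A).

Definition luders {Omega : finType} {n : nat} (A : Omega -> 'M[C]_n)
  (x : Omega) (rho : 'M[C]_n) : 'M[C]_n :=
  psd_sqrt (A x) *m rho *m psd_sqrt (A x).

Definition ptrace1 {m p : nat} (X : 'M[C]_(m * p)) : 'M[C]_p :=
  \matrix_(j, l) \sum_(i < m) X (mxtens_index (i, j)) (mxtens_index (i, l)).
Definition ptrace2 {m p : nat} (X : 'M[C]_(m * p)) : 'M[C]_m :=
  \matrix_(i, k) \sum_(j < p) X (mxtens_index (i, j)) (mxtens_index (k, j)).

Definition compatible_ins {Omega Lambda : finType} {n m p : nat}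
  (I : Omega -> 'M[C]_n -> 'M[C]_m) (J : Lambda -> 'M[C]_n -> 'M[C]_p) : Prop :=
  exists G : Omega * Lambda -> 'M[C]_n -> 'M[C]_(m * p),
    [/\ is_instrument G,
        forall (y : Lambda) (rho : 'M[C]_n), state rho ->
          \sum_(x : Omega) ptrace1 (G (x, y) rho) = J y rho
      & forall (x : Omega) (rho : 'M[C]_n), state rho ->
          \sum_(y : Lambda) ptrace2 (G (x, y) rho) = I x rho].

End Defs.

From HB Require Import structures.
From mathcomp Require Import all_boot all_order all_algebra.
From mathcomp Require Import mxtens spectral ring.
From Stdlib Require Import ClassicalEpsilon.
Set Implicit Arguments. Unset Strict Implicit. Unset Printing Implicit Defensive.
Import Order.TTheory GRing.Theory Num.Theory.
Local Open Scope ring_scope.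

(* Every instrument factors through the Lüders instrument of its induced POVM
   A: I_x = Phi_x o L_x with L_x(rho) = sqrt(A x) rho sqrt(A x) and Phi_x a
   channel. Indeed, writing I_x(rho) = sum_t K_t rho K_t^* (Choi-Kraus), we
   have A x = sum_t K_t^* K_t, hence K_t = (K_t R) sqrt(A x) for R a
   pseudo-inverse of sqrt(A x); the family (K_t R)_t is trace preserving on
   the range of sqrt(A x) and is completed into a channel on its kernel.
   Given a joint instrument G of the Lüders instruments, the instrument
   (Phi_x (x) Psi_y) o G_(x,y) is then a joint instrument of I and J: a
   channel acting on one tensor factor does not change the partial trace over
   that factor. *)


Section Adjoint.
Variable C : numClosedFieldType.

Lemma adjmxE r s (A : 'M[C]_(r, s)) i j : adjmx A i j = (A j i)^*.
Proof. by rewrite !mxE. Qed.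

Lemma adjmxK r s (A : 'M[C]_(r, s)) : adjmx (adjmx A) = A.
Proof. by apply/matrixP=> i j; rewrite !mxE conjCK. Qed.

Lemma adjmxM r s t (A : 'M[C]_(r, s)) (B : 'M[C]_(s, t)) :
  adjmx (A *m B) = adjmx B *m adjmx A.
Proof. by rewrite /adjmx map_mxM trmx_mul. Qed.

Lemma adjmxB r s (A B : 'M[C]_(r, s)) : adjmx (A - B) = adjmx A - adjmx B.
Proof. by apply/matrixP=> i j; rewrite !mxE rmorphB. Qed.

Lemma adjmx1 r : adjmx (1%:M : 'M[C]_r) = 1%:M.
Proof. by apply/matrixP=> i j; rewrite !mxE rmorph_nat eq_sym. Qed.

Lemma adjmx_delta r s (i : 'I_r) (j : 'I_s) :
  adjmx (delta_mx i j : 'M[C]_(r, s)) = delta_mx j i.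
Proof. by apply/matrixP=> a b; rewrite !mxE rmorph_nat andbC. Qed.

Lemma adjmx_diag n (d : 'rV[C]_n) : adjmx (diag_mx d) = diag_mx (map_mx Num.conj d).
Proof.
apply/matrixP=> i j; rewrite !mxE rmorphMn eq_sym.
by case: eqVneq => [->|] //=; rewrite !mulr0n.
Qed.

Lemma adjmx_tens m n p q (A : 'M[C]_(m, n)) (B : 'M[C]_(p, q)) :
  adjmx (A *t B) = adjmx A *t adjmx B.
Proof. by rewrite /adjmx map_mxT trmx_tens. Qed.

Lemma adjmx_quad n (A : 'M[C]_n) (v w : 'cV[C]_n) :
  (adjmx w *m adjmx A *m v) 0 0 = ((adjmx v *m A *m w) 0 0)^*.
Proof. by rewrite -adjmxE !adjmxM adjmxK mulmxA. Qed.

End Adjoint.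

Section Positivity.
Variable C : numClosedFieldType.

Lemma adjmx_mul_ge0 k (w : 'cV[C]_k) : 0 <= (adjmx w *m w) 0 0.
Proof. by rewrite mxE; apply: sumr_ge0 => i _; rewrite !mxE mulrC mul_conjC_ge0. Qed.

Lemma psdmx_conj k n (X : 'M[C]_k) (B : 'M[C]_(k, n)) :
  psdmx X -> psdmx (adjmx B *m X *m B).
Proof. by move=> X_psd v; have := X_psd (B *m v); rewrite adjmxM !mulmxA. Qed.

Lemma psdmx_gram k n (B : 'M[C]_(k, n)) : psdmx (adjmx B *m B).
Proof. by move=> v; rewrite mulmxA -adjmxM -mulmxA adjmx_mul_ge0. Qed.

Lemma psdmxD n (X Y : 'M[C]_n) : psdmx X -> psdmx Y -> psdmx (X + Y).
Proof. by move=> X_psd Y_psd v; rewrite mulmxDr mulmxDl mxE addr_ge0. Qed.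

Lemma psdmx_sum n (T : finType) (F : T -> 'M[C]_n) :
  (forall t, psdmx (F t)) -> psdmx (\sum_t F t).
Proof.
move=> F_psd; apply: (big_ind (@psdmx C n)) => //; last exact: psdmxD.
by move=> v; rewrite mulmx0 mul0mx mxE.
Qed.

Lemma psdmx_diag n (d : 'rV[C]_n) : (forall i, 0 <= d 0 i) -> psdmx (diag_mx d).
Proof.
move=> d_ge0 v; rewrite mul_mx_diag mxE; apply: sumr_ge0 => i _.
by rewrite !mxE mulrAC mulrC mulr_ge0 // mulrC mul_conjC_ge0.
Qed.

Lemma quad_delta n (A : 'M[C]_n) i j :
  (adjmx (delta_mx i 0 : 'cV[C]_n) *m A *m (delta_mx j 0 : 'cV[C]_n)) 0 0 = A i j.
Proof. by rewrite adjmx_delta -rowE -colE !mxE. Qed.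

Lemma quad_add_scale n (A : 'M[C]_n) (u w : 'cV[C]_n) c :
  (adjmx (u + c *: w) *m A *m (u + c *: w)) 0 0 =
  (adjmx u *m A *m u) 0 0 + c * (adjmx u *m A *m w) 0 0
  + c^* * (adjmx w *m A *m u) 0 0 + c^* * c * (adjmx w *m A *m w) 0 0.
Proof.
have entryD (X Y : 'M[C]_1) : (X + Y) 0 0 = X 0 0 + Y 0 0 by rewrite mxE.
have entryZ a (X : 'M[C]_1) : (a *: X) 0 0 = a * X 0 0 by rewrite mxE.
have -> : adjmx (u + c *: w) = adjmx u + c^* *: adjmx w.
  by apply/matrixP=> i j; rewrite !mxE rmorphD rmorphM.
rewrite !mulmxDl !mulmxDr -!scalemxAl -!scalemxAr !scalerA !entryD !entryZ.
ring.
Qed.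

Lemma quad_form_eq0 n (B : 'M[C]_n) :
  (forall v : 'cV[C]_n, (adjmx v *m B *m v) 0 0 = 0) -> B = 0.
Proof.
move=> B0; apply/matrixP=> i j; rewrite mxE.
have Bkk k : B k k = 0 by rewrite -quad_delta B0.
have polar c : c * B i j + c^* * B j i = 0.
  have := B0 (delta_mx i 0 + c *: delta_mx j 0).
  by rewrite quad_add_scale !quad_delta !Bkk mulr0 !addr0 add0r.
have := polar 'i; rewrite conjCi mulNr -mulrBr => /eqP.
rewrite mulf_eq0 (negPf (neq0Ci C)) subr_eq0 /= => /eqP Bji.
have /eqP := polar 1; rewrite rmorph1 !mul1r -Bji -mulr2n -mulr_natl.
by rewrite mulf_eq0 pnatr_eq0 => /eqP.
Qed.

Lemma psdmx_herm n (A : 'M[C]_n) : psdmx A -> adjmx A = A.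
Proof.
move=> A_psd; apply/eqP; rewrite -subr_eq0; apply/eqP/quad_form_eq0 => v.
have entryB (X Y : 'M[C]_1) : (X - Y) 0 0 = X 0 0 - Y 0 0 by rewrite !mxE.
rewrite mulmxBr mulmxBl entryB adjmx_quad conj_Creal ?subrr //.
exact: ger0_real.
Qed.

Lemma psdmx_spectral n (A : 'M[C]_n) : psdmx A ->
  exists (U : 'M[C]_n) (d : 'rV[C]_n),
    [/\ U *m adjmx U = 1%:M, adjmx U *m U = 1%:M, forall i, 0 <= d 0 i
      & A = adjmx U *m diag_mx d *m U].
Proof.
move=> A_psd; have adjE r s (M : 'M[C]_(r, s)) : (M ^t* )%sesqui = adjmx M.
  by rewrite /adjmx map_trmx.
have /orthomx_spectralP : A \is normalmx.
  by apply/normalmxP; rewrite adjE psdmx_herm.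
set U := spectralmx A; set d := spectral_diag A => A_spec.
have U_unitary : U \is unitarymx by apply: spectral_unitarymx.
have UU : U *m adjmx U = 1%:M by rewrite -adjE; apply/unitarymxP.
have invU : invmx U = adjmx U by rewrite invmx_unitary // adjE.
have UU' : adjmx U *m U = 1%:M by rewrite -invU mulVmx // spectral_unit.
rewrite invU in A_spec; exists U, d; split => // i.
have := A_psd (adjmx U *m delta_mx i 0).
rewrite adjmxM adjmxK A_spec !mulmxA -(mulmxA _ U (adjmx U)) UU mulmx1.
by rewrite -[_ *m U *m adjmx U]mulmxA UU mulmx1 quad_delta mxE eqxx mulr1n.
Qed.

Lemma diag_conjM n (U : 'M[C]_n) (d e : 'rV[C]_n) : U *m adjmx U = 1%:M ->
  adjmx U *m diag_mx d *m U *m (adjmx U *m diag_mx e *m U)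
  = adjmx U *m diag_mx (\row_i (d 0 i * e 0 i)) *m U.
Proof.
by move=> UU; rewrite -mulmx_diag !mulmxA -[_ *m U *m adjmx U]mulmxA UU mulmx1.
Qed.

Lemma psd_sqrt_spec n (A : 'M[C]_n) : psdmx A ->
  psdmx (psd_sqrt A) /\ psd_sqrt A *m psd_sqrt A = A.
Proof.
move=> A_psd.
apply: (epsilon_spec (inhabits (0 : 'M[C]_n)) (fun S => psdmx S /\ S *m S = A)).
have [U [d [UU _ d_ge0 ->]]] := psdmx_spectral A_psd.
exists (adjmx U *m diag_mx (\row_i sqrtC (d 0 i)) *m U); split.
  by apply: psdmx_conj; apply: psdmx_diag => i; rewrite mxE sqrtC_ge0.
rewrite diag_conjM //; congr (_ *m diag_mx _ *m _).
by apply/rowP=> i; rewrite !mxE -expr2 sqrtCK.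
Qed.

Lemma psdmx_pinv n (S : 'M[C]_n) : psdmx S ->
  exists R : 'M[C]_n, [/\ adjmx R = R, R *m S = S *m R & S *m R *m S = S].
Proof.
move=> S_psd; have [U [d [UU _ d_ge0 ->]]] := psdmx_spectral S_psd.
exists (adjmx U *m diag_mx (\row_i (d 0 i)^-1) *m U); split.
- rewrite !adjmxM adjmxK adjmx_diag mulmxA; congr (_ *m diag_mx _ *m _).
  by apply/rowP=> i; rewrite !mxE conj_Creal // rpredV ger0_real.
- rewrite !diag_conjM //; congr (_ *m diag_mx _ *m _).
  by apply/rowP=> i; rewrite !mxE mulrC.
- rewrite !diag_conjM //; congr (_ *m diag_mx _ *m _); apply/rowP=> i; rewrite !mxE.
  by have [->|d0] := eqVneq (d 0 i) 0; rewrite ?mulr0 // mulfV ?mul1r.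
Qed.

Lemma mxtrace_gram m n (M : 'M[C]_(m, n)) :
  \tr (adjmx M *m M) = \sum_i \sum_j `|M j i| ^+ 2.
Proof.
apply: eq_bigr => i _; rewrite mxE; apply: eq_bigr => j _.
by rewrite !mxE normCK mulrC.
Qed.

Lemma mxtrace_gram_ge0 m n (M : 'M[C]_(m, n)) : 0 <= \tr (adjmx M *m M).
Proof.
rewrite mxtrace_gram; apply: sumr_ge0 => i _; apply: sumr_ge0 => j _.
exact: exprn_ge0.
Qed.

Lemma mxtrace_gram_eq0 m n (M : 'M[C]_(m, n)) : \tr (adjmx M *m M) = 0 -> M = 0.
Proof.
have col_ge0 i : 0 <= \sum_j `|M j i| ^+ 2.
  by apply: sumr_ge0 => j _; exact: exprn_ge0.
rewrite mxtrace_gram => /(psumr_eq0P (fun i _ => col_ge0 i)) M0.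
apply/matrixP=> j i; rewrite mxE; apply/eqP.
have /(psumr_eq0P (fun j _ => exprn_ge0 _ (normr_ge0 (M j i)))) := M0 i isT.
by move/(_ j isT)/eqP; rewrite sqrf_eq0 normr_eq0.
Qed.

Lemma gram_sum_eq0 (T : finType) m n (K : T -> 'M[C]_(m, n)) :
  \sum_t adjmx (K t) *m K t = 0 -> forall t, K t = 0.
Proof.
move=> /(congr1 mxtrace); rewrite mxtrace0 raddf_sum.
move=> /(psumr_eq0P (fun t _ => mxtrace_gram_ge0 (K t))) tr0 t.
exact/mxtrace_gram_eq0/tr0.
Qed.

End Positivity.

Section LinearMaps.
Variable C : numClosedFieldType.

Section IsLinear.
Variables (n m : nat) (f : 'M[C]_n -> 'M[C]_m).
Hypothesis f_lin : is_linear f.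

Lemma is_linear0 : f 0 = 0.
Proof.
have := f_lin 1 0 0; rewrite scale1r addr0 scale1r => /esym/eqP.
by rewrite -subr_eq0 addrK => /eqP.
Qed.

Lemma is_linearD X Y : f (X + Y) = f X + f Y.
Proof. by have := f_lin 1 X Y; rewrite !scale1r. Qed.

Lemma is_linearZ a X : f (a *: X) = a *: f X.
Proof. by rewrite -[a *: X]addr0 f_lin is_linear0 addr0. Qed.

Lemma is_linear_sum (T : Type) (r : seq T) (P : pred T) (F : T -> 'M[C]_n) :
  f (\sum_(t <- r | P t) F t) = \sum_(t <- r | P t) f (F t).
Proof. exact: (big_morph f is_linearD is_linear0). Qed.

End IsLinear.

Lemma is_linear_comp n m q (f : 'M[C]_m -> 'M[C]_q) (g : 'M[C]_n -> 'M[C]_m) :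
  is_linear f -> is_linear g -> is_linear (f \o g).
Proof. by move=> f_lin g_lin a X Y /=; rewrite g_lin f_lin. Qed.

Lemma is_linear_delta n m (f : 'M[C]_n -> 'M[C]_m) X : is_linear f ->
  f X = \sum_a \sum_c X a c *: f (delta_mx a c).
Proof.
move=> f_lin; rewrite {1}(matrix_sum_delta X) is_linear_sum //; apply: eq_bigr => a _.
by rewrite is_linear_sum //; apply: eq_bigr => c _; rewrite is_linearZ.
Qed.

End LinearMaps.

Section Tensors.
Variable C : numClosedFieldType.

Lemma sum_mxtens (V : nmodType) k n (F : 'I_(k * n) -> V) :
  \sum_(i < k * n) F i = \sum_(a < k) \sum_(e < n) F (mxtens_index (a, e)).
Proof.
rewrite pair_big /= (reindex (@mxtens_unindex k n)) /=; last first.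
  by exists (@mxtens_index k n) => x _; rewrite (mxtens_indexK, mxtens_unindexK).
by apply: eq_bigr => i _; rewrite mxtens_unindexK.
Qed.

Lemma delta_mx_tens k k' n n' (a : 'I_k) (c : 'I_k') (e : 'I_n) (f : 'I_n') :
  delta_mx (mxtens_index (a, e)) (mxtens_index (c, f))
  = delta_mx a c *t delta_mx e f :> 'M[C]_(k * n, k' * n').
Proof.
apply/matrixP=> i j; case: (mxtens_indexP i) => a' e'; case: (mxtens_indexP j) => c' f'.
by rewrite tensmxE !mxE !(can_eq (@mxtens_indexK _ _)) !xpair_eqE -natrM mulnb andbACA.
Qed.

Lemma matrix_sum_delta_tens k k' n n' (X : 'M[C]_(k * n, k' * n')) :
  X = \sum_a \sum_c \sum_e \sum_f
        X (mxtens_index (a, e)) (mxtens_index (c, f)) *: (delta_mx a c *t delta_mx e f).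
Proof.
rewrite {1}(matrix_sum_delta X) sum_mxtens; apply: eq_bigr => a _.
rewrite exchange_big sum_mxtens; apply: eq_bigr => c _.
rewrite exchange_big; apply: eq_bigr => e _; apply: eq_bigr => f _.
by rewrite delta_mx_tens.
Qed.

Lemma tensmxDl m n p q (A A' : 'M[C]_(m, n)) (B : 'M[C]_(p, q)) :
  (A + A') *t B = A *t B + A' *t B.
Proof. by apply/matrixP=> i j; rewrite !mxE mulrDl. Qed.

Lemma tensmxDr m n p q (A : 'M[C]_(m, n)) (B B' : 'M[C]_(p, q)) :
  A *t (B + B') = A *t B + A *t B'.
Proof. by apply/matrixP=> i j; rewrite !mxE mulrDr. Qed.

Lemma tensmx_suml m n p q (T : finType) (F : T -> 'M[C]_(m, n)) (B : 'M[C]_(p, q)) :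
  (\sum_t F t) *t B = \sum_t F t *t B.
Proof.
exact: (big_morph (fun A => A *t B) (fun A A' => tensmxDl A A' B) (@tens0mx _ m n _ _ B)).
Qed.

Lemma tensmx_sumr m n p q (A : 'M[C]_(m, n)) (T : finType) (F : T -> 'M[C]_(p, q)) :
  A *t (\sum_t F t) = \sum_t A *t F t.
Proof. exact: (big_morph _ (tensmxDr A) (@tensmx0 _ _ _ p q A)). Qed.

Lemma tensmx11 m n : (1%:M : 'M[C]_m) *t (1%:M : 'M[C]_n) = 1%:M.
Proof.
apply/matrixP=> i j; case: (mxtens_indexP i) => a e; case: (mxtens_indexP j) => c f.
by rewrite tensmxE !mxE (can_eq (@mxtens_indexK _ _)) xpair_eqE -natrM mulnb.
Qed.

Lemma is_linear_eq_tens k n q (f g : 'M[C]_(k * n) -> 'M[C]_q) :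
  is_linear f -> is_linear g ->
  (forall (A : 'M[C]_k) (B : 'M[C]_n), f (A *t B) = g (A *t B)) -> f =1 g.
Proof.
move=> f_lin g_lin fg X; rewrite (matrix_sum_delta_tens X).
rewrite !is_linear_sum //; apply: eq_bigr => a _.
rewrite !is_linear_sum //; apply: eq_bigr => c _.
rewrite !is_linear_sum //; apply: eq_bigr => e _.
rewrite !is_linear_sum //; apply: eq_bigr => f' _.
by rewrite !is_linearZ // fg.
Qed.

End Tensors.

Section Kraus.
Variable C : numClosedFieldType.

Lemma mxblock_of_tens k n (A : 'M[C]_k) (B : 'M[C]_n) a c :
  mxblock_of (A *t B) a c = A a c *: B.
Proof. by apply/matrixP=> i j; rewrite !mxE !mxtens_indexK. Qed.

Lemma mxblock_of_ampliate k n m (f : 'M[C]_n -> 'M[C]_m) (X : 'M[C]_(k * n)) a c :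
  mxblock_of (ampliate (k:=k) f X) a c = f (mxblock_of X a c).
Proof. by apply/matrixP=> i j; rewrite !mxE !mxtens_indexK. Qed.

Lemma ampliate_linear k n m (f : 'M[C]_n -> 'M[C]_m) :
  is_linear f -> is_linear (ampliate (k:=k) f).
Proof.
move=> f_lin a X Y; apply/matrixP=> i j.
have blockZD b d : mxblock_of (a *: X + Y) b d = a *: mxblock_of X b d + mxblock_of Y b d.
  by apply/matrixP=> ? ?; rewrite !mxE.
by rewrite !mxE blockZD f_lin !mxE.
Qed.

Lemma ampliate_tens k n m (f : 'M[C]_n -> 'M[C]_m) (A : 'M[C]_k) (B : 'M[C]_n) :
  is_linear f -> ampliate (k:=k) f (A *t B) = A *t f B.
Proof.
by move=> f_lin; apply/matrixP=> i j; rewrite !mxE mxblock_of_tens is_linearZ // mxE.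
Qed.

Lemma ampliate_comp k n m q (f : 'M[C]_m -> 'M[C]_q) (g : 'M[C]_n -> 'M[C]_m) X :
  ampliate (k:=k) (f \o g) X = ampliate (k:=k) f (ampliate (k:=k) g X).
Proof. by apply/matrixP=> i j; rewrite !mxE mxblock_of_ampliate. Qed.

Lemma completely_positive_comp n m q (f : 'M[C]_m -> 'M[C]_q) (g : 'M[C]_n -> 'M[C]_m) :
  completely_positive f -> completely_positive g -> completely_positive (f \o g).
Proof. by move=> f_cp g_cp k X X_psd; rewrite ampliate_comp; apply/f_cp/g_cp. Qed.

Definition kraus (T : finType) m n (K : T -> 'M[C]_(m, n)) (X : 'M[C]_n) : 'M[C]_m :=
  \sum_t K t *m X *m adjmx (K t).

Lemma kraus_linear (T : finType) m n (K : T -> 'M[C]_(m, n)) : is_linear (kraus K).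
Proof.
move=> a X Y; rewrite /kraus scaler_sumr -big_split /=; apply: eq_bigr => t _.
by rewrite mulmxDr mulmxDl -scalemxAr -scalemxAl.
Qed.

Lemma kraus_tens (T T' : finType) m n p q (F : T -> 'M[C]_(m, n)) (L : T' -> 'M[C]_(p, q))
    (A : 'M[C]_n) (B : 'M[C]_q) :
  kraus (fun ts : T * T' => F ts.1 *t L ts.2) (A *t B) = kraus F A *t kraus L B.
Proof.
rewrite /kraus tensmx_suml; under [RHS]eq_bigr do rewrite tensmx_sumr.
by rewrite pair_bigA; apply: eq_bigr => -[t s] _; rewrite adjmx_tens !tensmx_mul.
Qed.

Lemma ampliate_kraus k (T : finType) m n (K : T -> 'M[C]_(m, n)) (X : 'M[C]_(k * n)) :
  ampliate (kraus K) X = kraus (fun t => (1%:M : 'M[C]_k) *t K t) X.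
Proof.
have ampl_lin := ampliate_linear (k:=k) (kraus_linear K).
apply: (is_linear_eq_tens ampl_lin (kraus_linear _)) => A B.
rewrite ampliate_tens; last exact: kraus_linear.
rewrite /kraus tensmx_sumr; apply: eq_bigr => t _.
by rewrite adjmx_tens adjmx1 !tensmx_mul mul1mx mulmx1.
Qed.

Lemma kraus_cp (T : finType) m n (K : T -> 'M[C]_(m, n)) : completely_positive (kraus K).
Proof.
move=> k X X_psd; rewrite ampliate_kraus /kraus; apply: psdmx_sum => t.
by rewrite -[X in X *m _ *m _]adjmxK; apply: psdmx_conj.
Qed.

Lemma mxtrace_kraus (T : finType) m n (K : T -> 'M[C]_(m, n)) X :
  \tr (kraus K X) = \tr ((\sum_t adjmx (K t) *m K t) *m X).
Proof.
rewrite /kraus mulmx_suml !raddf_sum; apply: eq_bigr => t _.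
by rewrite /= mxtrace_mulC mulmxA.
Qed.

End Kraus.

Section Channels.
Variable C : numClosedFieldType.

Record channel m n := Channel {
  chan_index : finType;
  chan_kraus :> chan_index -> 'M[C]_(m, n);
  chan_tp : \sum_t adjmx (chan_kraus t) *m chan_kraus t = 1%:M }.

Lemma mxtrace_chan m n (Phi : channel m n) X : \tr (kraus Phi X) = \tr X.
Proof. by rewrite mxtrace_kraus chan_tp mul1mx. Qed.

Lemma chan_tens_tp m n p q (Phi : channel m n) (Psi : channel p q) :
  \sum_(ts : chan_index Phi * chan_index Psi)
    adjmx (Phi ts.1 *t Psi ts.2) *m (Phi ts.1 *t Psi ts.2) = 1%:M.
Proof.
rewrite -tensmx11 -(chan_tp Phi) -(chan_tp Psi) tensmx_suml.
under [RHS]eq_bigr do rewrite tensmx_sumr.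
by rewrite pair_bigA; apply: eq_bigr => -[t s] _; rewrite adjmx_tens tensmx_mul.
Qed.

Definition chan_tens m n p q (Phi : channel m n) (Psi : channel p q) :
  channel (m * p) (n * q) := Channel (chan_tens_tp Phi Psi).

Lemma ptrace1_linear m p : is_linear (@ptrace1 C m p).
Proof.
move=> a X Y; apply/matrixP=> i k; rewrite !mxE mulr_sumr -big_split /=.
by apply: eq_bigr => j _; rewrite !mxE.
Qed.

Lemma ptrace2_linear m p : is_linear (@ptrace2 C m p).
Proof.
move=> a X Y; apply/matrixP=> i k; rewrite !mxE mulr_sumr -big_split /=.
by apply: eq_bigr => j _; rewrite !mxE.
Qed.

Lemma ptrace1_tens m p (A : 'M[C]_m) (B : 'M[C]_p) : ptrace1 (A *t B) = \tr A *: B.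
Proof.
apply/matrixP=> i k; rewrite !mxE mulr_suml; apply: eq_bigr => j _.
by rewrite tensmxE.
Qed.

Lemma ptrace2_tens m p (A : 'M[C]_m) (B : 'M[C]_p) : ptrace2 (A *t B) = \tr B *: A.
Proof.
apply/matrixP=> i k; rewrite !mxE mulr_suml; apply: eq_bigr => j _.
by rewrite tensmxE mulrC.
Qed.

Lemma ptrace1_chan_tens m n p q (Phi : channel m n) (Psi : channel p q) Z :
  ptrace1 (kraus (chan_tens Phi Psi) Z) = kraus Psi (ptrace1 Z).
Proof.
move: Z; apply: is_linear_eq_tens => [||A B /=].
- exact/is_linear_comp/kraus_linear/ptrace1_linear.
- exact/is_linear_comp/ptrace1_linear/kraus_linear.
by rewrite kraus_tens !ptrace1_tens mxtrace_chan is_linearZ //; exact: kraus_linear.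
Qed.

Lemma ptrace2_chan_tens m n p q (Phi : channel m n) (Psi : channel p q) Z :
  ptrace2 (kraus (chan_tens Phi Psi) Z) = kraus Phi (ptrace2 Z).
Proof.
move: Z; apply: is_linear_eq_tens => [||A B /=].
- exact/is_linear_comp/kraus_linear/ptrace2_linear.
- exact/is_linear_comp/ptrace2_linear/kraus_linear.
by rewrite kraus_tens !ptrace2_tens mxtrace_chan is_linearZ //; exact: kraus_linear.
Qed.

End Channels.

Section ChoiKraus.
Variable C : numClosedFieldType.

Lemma mulmx3E r s t u (A : 'M[C]_(r, s)) (X : 'M[C]_(s, t)) (B : 'M[C]_(t, u)) i j :
  (A *m X *m B) i j = \sum_a \sum_c A i a * X a c * B c j.
Proof.
rewrite mxE exchange_big; apply: eq_bigr => c _; rewrite mxE mulr_suml.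
by apply: eq_bigr => a _.
Qed.

Lemma diag_conjE n (U : 'M[C]_n) (d : 'rV[C]_n) i j :
  (adjmx U *m diag_mx d *m U) i j = \sum_r (U r i)^* * d 0 r * U r j.
Proof. by rewrite mul_mx_diag mxE; apply: eq_bigr => r _; rewrite !mxE. Qed.

Theorem choi_kraus n m (f : 'M[C]_n -> 'M[C]_m) : is_linear f -> completely_positive f ->
  exists K : 'I_(n * m) -> 'M[C]_(m, n), forall X, f X = kraus K X.
Proof.
move=> f_lin f_cp.
(* [psi *m adjmx psi] is the maximally entangled projection (unnormalised), so
   its ampliation by [f] is the Choi matrix of [f]. *)
pose psi : 'cV[C]_(n * n) := \col_i ((mxtens_unindex i).1 == (mxtens_unindex i).2)%:R.
have psi_block a c : mxblock_of (psi *m adjmx psi) a c = delta_mx a c.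
  apply/matrixP=> b d; rewrite !mxE big_ord1 !mxE !mxtens_indexK /= rmorph_nat.
  by rewrite -natrM mulnb [a == b]eq_sym [c == d]eq_sym.
have Choi_psd : psdmx (ampliate f (psi *m adjmx psi)).
  by apply: f_cp; rewrite -[psi in psi *m _]adjmxK; apply: psdmx_gram.
have [U [d [_ _ d_ge0 ChoiE]]] := psdmx_spectral Choi_psd.
have f_delta a c i j : f (delta_mx a c) i j =
    \sum_r (U r (mxtens_index (a, i)))^* * d 0 r * U r (mxtens_index (c, j)).
  by rewrite -psi_block -mxblock_of_ampliate ChoiE mxE diag_conjE.
exists (fun r => \matrix_(i, a) ((U r (mxtens_index (a, i)))^* * sqrtC (d 0 r))) => X.
apply/matrixP=> i j; rewrite (is_linear_delta X f_lin) /kraus !summxE.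
under eq_bigr do rewrite summxE.
under [RHS]eq_bigr do rewrite mulmx3E.
rewrite [RHS]exchange_big; apply: eq_bigr => a _.
rewrite [RHS]exchange_big; apply: eq_bigr => c _.
rewrite mxE f_delta mulr_sumr; apply: eq_bigr => r _.
have sqrt_real : (sqrtC (d 0 r))^* = sqrtC (d 0 r).
  by rewrite conj_Creal // ger0_real // sqrtC_ge0.
rewrite !mxE rmorphM /= conjCK sqrt_real -[d 0 r in LHS]sqrtCK expr2.
ring.
Qed.

End ChoiKraus.

Section Factorization.
Variable C : numClosedFieldType.

Lemma mxtrace_mul_delta n (M : 'M[C]_n) i j : \tr (M *m delta_mx j i) = M i j.
Proof.
rewrite /mxtrace (bigD1 i) //= big1 ?addr0 => [|k ki].
  rewrite mxE (bigD1 j) //= big1 ?addr0 => [|l lj]; first by rewrite mxE !eqxx mulr1.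
  by rewrite mxE (negPf lj) mulr0.
by rewrite mxE big1 // => l _; rewrite mxE (negPf ki) andbF mulr0.
Qed.

Lemma induced_povm_kraus (Omega T : finType) n m (I : Omega -> 'M[C]_n -> 'M[C]_m) x
    (K : T -> 'M[C]_(m, n)) :
  (forall X, I x X = kraus K X) -> induced_povm I x = \sum_t adjmx (K t) *m K t.
Proof.
by move=> IK; apply/matrixP=> i j; rewrite mxE IK mxtrace_kraus mxtrace_mul_delta.
Qed.

Lemma kraus_mulmx_eq0 (T : finType) m n (K : T -> 'M[C]_(m, n)) (S Q : 'M[C]_n) :
  S *m S = \sum_t adjmx (K t) *m K t -> S *m Q = 0 -> forall t, K t *m Q = 0.
Proof.
move=> SS SQ; apply: gram_sum_eq0.
have -> : \sum_t adjmx (K t *m Q) *m (K t *m Q) = adjmx Q *m (S *m S) *m Q.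
  by rewrite SS mulmx_sumr mulmx_suml; apply: eq_bigr => t _; rewrite adjmxM !mulmxA.
by rewrite -mulmxA -mulmxA SQ !mulmx0.
Qed.

Lemma channel_complete (T : finType) m n (V : T -> 'M[C]_(m, n)) (Q : 'M[C]_n) :
  (m = 0 -> n = 0)%N -> \sum_t adjmx (V t) *m V t + adjmx Q *m Q = 1%:M ->
  exists Phi : channel C m n, forall X, Q *m X = 0 -> kraus Phi X = kraus V X.
Proof.
(* The completing Kraus operators [delta_mx 0 i *m Q] need [0 < m]; when
   [m = 0], also [n = 0] and [V] itself is a channel. *)
case: m V => [|k] V dim VQ.
  have n0 := dim erefl; subst n.
  have V_tp : \sum_t adjmx (V t) *m V t = 1%:M by rewrite [LHS]flatmx0 [RHS]flatmx0.
  by exists (Channel V_tp).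
pose W (u : T + 'I_n) : 'M[C]_(k.+1, n) :=
  match u with inl t => V t | inr i => delta_mx 0 i *m Q end.
have W_tp : \sum_u adjmx (W u) *m W u = 1%:M.
  rewrite big_sumType /= -VQ; congr (_ + _).
  rewrite -[adjmx Q]mulmx1 mx1_sum_delta mulmx_sumr mulmx_suml.
  apply: eq_bigr => i _; rewrite adjmxM adjmx_delta !mulmxA.
  by rewrite -[_ *m delta_mx i 0 *m delta_mx 0 i]mulmxA mul_delta_mx.
exists (Channel W_tp) => X QX.
rewrite /kraus big_sumType /= [X in _ + X]big1 ?addr0 //.
by move=> i _; rewrite -[_ *m Q *m X]mulmxA QX mulmx0 mul0mx.
Qed.

Lemma kraus_factor (T : finType) m n (K : T -> 'M[C]_(m, n)) (S : 'M[C]_n) :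
  (m = 0 -> n = 0)%N -> psdmx S -> S *m S = \sum_t adjmx (K t) *m K t ->
  exists Phi : channel C m n, forall X, kraus Phi (S *m X *m S) = kraus K X.
Proof.
move=> dim S_psd SS; have [R [R_herm RS SRS]] := psdmx_pinv S_psd.
(* [P] projects onto the range of [S]; the operators [K t *m R] act as [K t] on
   that range and are completed into a channel by [1 - P]. *)
pose P := S *m R.
have P_herm : adjmx P = P by rewrite adjmxM R_herm psdmx_herm.
have PS : P *m S = S by exact: SRS.
have SP : S *m P = S by rewrite /P -RS mulmxA SRS.
have KP t : K t *m P = K t.
  apply/eqP; rewrite -subr_eq0 -{2}[K t]mulmx1 -mulmxBr; apply/eqP.
  by apply: (kraus_mulmx_eq0 SS); rewrite mulmxBr mulmx1 SP subrr.
have [|Phi PhiE] := @channel_complete _ _ _ (fun t => K t *m R) (1%:M - P) dim.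
  have -> : \sum_t adjmx (K t *m R) *m (K t *m R) = R *m (S *m S) *m R.
    rewrite SS mulmx_sumr mulmx_suml; apply: eq_bigr => t _.
    by rewrite adjmxM R_herm !mulmxA.
  rewrite !mulmxA RS SRS -/P adjmxB adjmx1 P_herm mulmxBr mulmx1 mulmxBl mul1mx.
  by rewrite /P mulmxA SRS subrr subr0 addrC subrK.
exists Phi => X; rewrite PhiE; last first.
  by rewrite !mulmxA mulmxBl mul1mx PS subrr !mul0mx.
apply: eq_bigr => t _; rewrite adjmxM R_herm.
have KRS : K t *m R *m S = K t by rewrite -mulmxA RS KP.
have SRK : S *m (R *m adjmx (K t)) = adjmx (K t).
  by rewrite mulmxA -/P -P_herm -adjmxM KP.
by rewrite !mulmxA KRS -!mulmxA SRK mulmxA.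
Qed.

End Factorization.

Section Instruments.
Variable C : numClosedFieldType.

Lemma instrument_dim (Omega : finType) n m (I : Omega -> 'M[C]_n -> 'M[C]_m) :
  is_instrument I -> (m = 0 -> n = 0)%N.
Proof.
case=> _ _ _ I_tp m0; subst m; have := I_tp 1%:M.
by rewrite mxtrace1 /mxtrace big_ord0 => /eqP; rewrite eq_sym pnatr_eq0 => /eqP.
Qed.

Lemma instrument_luders_factor (Omega : finType) n m (I : Omega -> 'M[C]_n -> 'M[C]_m) :
  is_instrument I -> exists Phi : Omega -> channel C m n,
    forall x rho, kraus (Phi x) (luders (induced_povm I) x rho) = I x rho.
Proof.
move=> I_ins; have [I_lin I_cp _ _] := I_ins.
apply: (choice (fun x (Phi : channel C m n) =>
  forall rho, kraus Phi (luders (induced_povm I) x rho) = I x rho)) => x.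
have [K IK] := choi_kraus (I_lin x) (I_cp x).
have povmE := induced_povm_kraus IK.
have A_psd : psdmx (induced_povm I x).
  by rewrite povmE; apply: psdmx_sum => t; apply: psdmx_gram.
have [S_psd SS] := psd_sqrt_spec A_psd.
have [Phi PhiE] := kraus_factor (instrument_dim I_ins) S_psd (etrans SS povmE).
by exists Phi => rho; rewrite /luders PhiE IK.
Qed.

Lemma is_instrument_post (Omega : finType) n m k (G : Omega -> 'M[C]_n -> 'M[C]_m)
    (Phi : Omega -> channel C k m) :
  is_instrument G -> is_instrument (fun x rho => kraus (Phi x) (G x rho)).
Proof.
case=> G_lin G_cp G_tr G_tp; split=> [x|x|x rho rho_psd|rho].
- exact: is_linear_comp (kraus_linear _) (G_lin x).
- exact: completely_positive_comp (kraus_cp _) (G_cp x).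
- by rewrite mxtrace_chan G_tr.
- by rewrite -G_tp !raddf_sum; apply: eq_bigr => x _; rewrite /= mxtrace_chan.
Qed.

End Instruments.

Theorem proposition2 (C : numClosedFieldType) (Omega Lambda : finType)
  (n m p : nat) (I : Omega -> 'M[C]_n -> 'M[C]_m)
  (J : Lambda -> 'M[C]_n -> 'M[C]_p) :
  is_instrument I -> is_instrument J ->
  compatible_ins (luders (induced_povm I)) (luders (induced_povm J)) ->
  compatible_ins I J.
Proof.
move=> I_ins J_ins [G [G_ins G_J G_I]].
have [Phi PhiE] := instrument_luders_factor I_ins.
have [Psi PsiE] := instrument_luders_factor J_ins.
exists (fun xy rho => kraus (chan_tens (Phi xy.1) (Psi xy.2)) (G xy rho)); split.
- exact: (is_instrument_post (fun xy => chan_tens (Phi xy.1) (Psi xy.2)) G_ins).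
- move=> y rho rho_state; under eq_bigr do rewrite ptrace1_chan_tens.
  by rewrite -(is_linear_sum (kraus_linear (Psi y))) G_J // PsiE.
- move=> x rho rho_state; under eq_bigr do rewrite ptrace2_chan_tens.
  by rewrite -(is_linear_sum (kraus_linear (Phi x))) G_I // PhiE.
Qed.
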